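(* Let $\mu$ be a valuated matroid on $[n]$. (i) Let $f=(f_1,f_2):[n]\cup\{o\}\to([n]\cup\{o\})\times\mathbb{T}$ be a map with $f_2(i)=0$ whenever $f_1(i)\neq o$. Then for any weakly monomial matrix $A_f$ associated to $f$, $\overline{\operatorname{trop}}(f^{-1}(\mu))=\mathrm{val}(A_f)\odot\overline{\operatorname{trop}}(\mu)$. (ii) Conversely, if $A_f\in K^{n\times n}$ is a weakly monomial matrix with entries in $\{0,1\}$, then its associated map $f$ satisfies $\overline{\operatorname{trop}}(f^{-1}(\mu))=\mathrm{val}(A_f)\odot\overline{\operatorname{trop}}(\mu)$.
   Context: $K$ is a field with non-Archimedean valuation $\mathrm{val}:K\to\mathbb{T}=\mathbb{R}\cup\{\infty\}$; $(\mathrm{val}(M)\odot v)_i=\min_j(\mathrm{val}(M_{ij})+v_j)$, applied pointwise to sets. Valuated matroid of rank $r$ on finite $E$: $\nu:\binom{E}{r}\to\mathbb{T}$, not identically $\infty$, with exchange property (for all $I,J$, $i\in I\setminus J$ there is $j\in J\setminus I$ with $\nu(I)+\nu(J)\ge\nu((I\setminus i)\cup j)+\nu((J\setminus j)\cup i)$), up to additive constants; $\overline{\operatorname{trop}}(\nu)\subseteq\mathbb{P}(\mathbb{T}^E)$ is the set of $x$ with $\min_e(C_\nu(I)_e+x_e)$ attained at least twice for all $I\in\binom{E}{r+1}$ with $C_\nu(I)\ne(\infty,\dots)$, where $C_\nu(I)_e=\nu(I\setminus e)$ for $e\in I$, $\infty$ else. Pointed matroid $\mu_o$: $\mu$ extended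 to $[n]\cup\{o\}$ with $o$ a loop. With $S=f_1([n]\cup\{o\})$, the affine induced valuated matroid is $f^{-1}(\mu)(B)=\mu_o|_S(f_1(B))+\sum_{i\in B}f_2(i)$, where $\mu_o|_S$ is the restriction of $\mu_o$ to $S$ and $|B|$ equals its rank (value $\infty$ if $|f_1(B)|$ is too small); $\overline{\operatorname{trop}}(f^{-1}(\mu))$ denotes the projection to the coordinates in $[n]$ of its tropical linear space. Weakly monomial: at most one nonzero entry per row. Associated matrix of $f$ (defined when $f_2(i)\in\mathrm{val}(K)$ for all $i\in[n]$): $(A_f)_{ij}=k_i$ if $f_1(i)=j\in[n]$ with $\mathrm{val}(k_i)=f_2(i)$, and $0$ otherwise. Associated map of a weakly monomial $M$: $f(o)=(o,\infty)$; $f(i)=(o,\infty)$ if row $i$ of $M$ is zero; $f(i)=(j,\mathrm{val}(M_{ij}))$ if $M_{ij}\neq0$. *)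

From HB Require Import structures.
From mathcomp Require Import all_boot all_order all_algebra.
From mathcomp Require Import reals.
Set Implicit Arguments. Unset Strict Implicit. Unset Printing Implicit Defensive.
Import Order.TTheory GRing.Theory Num.Theory.
Local Open Scope ring_scope.

(* ---------- The tropical semiring T = R u {oo}, oo = None ---------- *)
Definition T (R : realType) := option R.

Section Trop.
Variable R : realType.

(* tropical product = ordinary addition, with oo absorbing *)
Definition Tadd (x y : T R) : T R :=
  match x, y with Some a, Some b => Some (a + b) | _, _ => None end.

Definition Tle (x y : T R) : bool :=
  match x, y with
  | _, None => true
  | None, Some _ => false
  | Some a, Some b => a <= b
  end.

Definition Tmin (x y : T R) : T R := if Tle x y then x else y.

Definition nonarch_valuation (K : fieldType) (val : K -> T R) : Prop :=
  [/\ forall x, val x = None <-> x = 0,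
      forall x y, val (x * y) = Tadd (val x) (val y)
    & forall x y, Tle (Tmin (val x) (val y)) (val (x + y))].

Definition tmatvec (K : fieldType) (val : K -> T R) (n : nat) (M : 'M[K]_n)
    (v : 'I_n -> T R) : 'I_n -> T R :=
  fun i => \big[Tmin/None]_(j < n) Tadd (val (M i j)) (v j).

(* nu is given on all subsets; only its values on r-subsets matter. *)
Definition valuated_matroid (E : finType) (r : nat) (nu : {set E} -> T R) : Prop :=
  (exists B : {set E}, #|B| = r /\ nu B <> None) /\
  forall I J : {set E}, #|I| = r -> #|J| = r ->
    forall i, i \in I :\: J ->
      exists2 j, j \in J :\: I &
        Tle (Tadd (nu (j |: (I :\ i))) (nu (i |: (J :\ j)))) (Tadd (nu I) (nu J)).

Definition circ (E : finType) (nu : {set E} -> T R) (I : {set E}) (e : E) : T R :=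
  if e \in I then nu (I :\ e) else None.

(* the tropical linear space trop(nu) of a rank-r valuated matroid, as the set of
   representatives x in T^E \ {(oo,...,oo)} of points of P(T^E)
   (it is invariant under adding a real constant) *)
Definition trop (E : finType) (r : nat) (nu : {set E} -> T R) (x : E -> T R) : Prop :=
  (exists e, x e <> None) /\
  forall I : {set E}, #|I| = r.+1 -> (exists e, circ nu I e <> None) ->
    let m := \big[Tmin/None]_(e : E) Tadd (circ nu I e) (x e) in
    exists e1 e2 : E, [/\ e1 <> e2,
      Tadd (circ nu I e1) (x e1) = m & Tadd (circ nu I e2) (x e2) = m].

Definition rank_in (E : finType) (r : nat) (nu : {set E} -> T R) (S : {set E}) : nat :=
  (\max_(B : {set E} | (#|B| == r) && (nu B != None)) #|B :&: S|)%N.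

(* restriction nu|_S, a valuated matroid of rank rank_in r nu S on S
   (well defined up to an additive constant; here the choice-free formula
    nu|_S(B) = min_{C subset E\S, |C| = r - r_S} nu(B u C)) *)
Definition restr (E : finType) (r : nat) (nu : {set E} -> T R) (S : {set E})
    (B : {set E}) : T R :=
  \big[Tmin/None]_(C : {set E} | (C \subset ~: S) && (#|C| == r - rank_in r nu S)%N)
     nu (B :|: C).

(* [n] u {o} is  option 'I_n,  with o = None *)
Definition pointed (n : nat) (mu : {set 'I_n} -> T R) (B : {set option 'I_n}) : T R :=
  if None \in B then None else mu [set i | Some i \in B].

Definition Tsum (E : finType) (B : {set E}) (g : E -> T R) : T R :=
  \big[Tadd/Some 0]_(i in B) g i.

Definition fimage (n : nat) (f1 : option 'I_n -> option 'I_n) : {set option 'I_n} :=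
  f1 @: [set: option 'I_n].

Definition induced_rank (n r : nat) (mu : {set 'I_n} -> T R)
    (f1 : option 'I_n -> option 'I_n) : nat :=
  rank_in r (pointed mu) (fimage f1).

Definition induced (n r : nat) (mu : {set 'I_n} -> T R)
    (f1 : option 'I_n -> option 'I_n) (f2 : option 'I_n -> T R)
    (B : {set option 'I_n}) : T R :=
  if #|f1 @: B| == #|B| then
    Tadd (restr r (pointed mu) (fimage f1) (f1 @: B)) (Tsum B f2)
  else None.

(* projection to the coordinates in [n] of trop(f^{-1}(mu)) *)
Definition trop_induced (n r : nat) (mu : {set 'I_n} -> T R)
    (f1 : option 'I_n -> option 'I_n) (f2 : option 'I_n -> T R) (y : 'I_n -> T R) : Prop :=
  exists2 x : option 'I_n -> T R,
    trop (induced_rank r mu f1) (induced r mu f1 f2) x & forall i, x (Some i) = y i.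

Definition trop_image (K : fieldType) (val : K -> T R) (n r : nat)
    (mu : {set 'I_n} -> T R) (A : 'M[K]_n) (y : 'I_n -> T R) : Prop :=
  exists2 x : 'I_n -> T R, trop r mu x & forall i, tmatvec val A x i = y i.

(* equality of the two subsets of P(T^n) (both sides are cones, so it suffices
   to compare representatives that are not (oo,...,oo)) *)
Definition Pset_eq (n : nat) (P Q : ('I_n -> T R) -> Prop) : Prop :=
  forall y : 'I_n -> T R, (exists i, y i <> None) -> (P y <-> Q y).

Definition weakly_monomial (K : fieldType) (n : nat) (A : 'M[K]_n) : Prop :=
  forall i j1 j2, A i j1 != 0 -> A i j2 != 0 -> j1 = j2.

Definition assoc_matrix (K : fieldType) (val : K -> T R) (n : nat)
    (f1 : option 'I_n -> option 'I_n) (f2 : option 'I_n -> T R) (A : 'M[K]_n) : Prop :=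
  (forall i : 'I_n, exists k : K, val k = f2 (Some i)) /\
  forall i j : 'I_n,
    (f1 (Some i) = Some j -> val (A i j) = f2 (Some i)) /\
    (f1 (Some i) <> Some j -> A i j = 0).

Definition assoc_map1 (K : fieldType) (n : nat) (A : 'M[K]_n)
    (i : option 'I_n) : option 'I_n :=
  match i with
  | None => None
  | Some i => [pick j | A i j != 0]
  end.

Definition assoc_map2 (K : fieldType) (val : K -> T R) (n : nat) (A : 'M[K]_n)
    (i : option 'I_n) : T R :=
  match i with
  | None => None
  | Some i => if [pick j | A i j != 0] is Some j then val (A i j) else None
  end.

End Trop.

From HB Require Import structures.
From mathcomp Require Import all_boot all_order all_algebra.
From mathcomp Require Import reals.
From mathcomp Require Import lra zify.
Set Implicit Arguments. Unset Strict Implicit. Unset Printing Implicit Defensive.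
Import Order.TTheory GRing.Theory Num.Theory.
Local Open Scope ring_scope.

(* For an associated matrix with f2 = 0 off the loops, (val(A_f) (.) x)_i = x_(f1 i)
   (and oo when f1 i = o); in (ii), f2 = val 1 = 0. So both parts say that
   trop(f^-1(mu)) = { x o f1 : x in trop(mu_o) }, where x lies in trop(nu) iff for every
   circuit vector C of nu no finite term of C + x is a strict minimum.
   Inclusion from right to left: a circuit of f^-1(mu) either contains two elements with
   the same image, whose terms coincide, or is mapped injectively onto a circuit of
   mu_o|_S, and restricting coordinates maps trop(mu_o) into trop(mu_o|_S).
   Left to right: a point X of trop(f^-1(mu)) is oo on loops and constant on the fibres
   of f1, so X = z o f1 with z in trop(mu_o|_S), and such a z lifts to trop(mu_o). For
   the lift, choose for each finite coordinate e of z a basis B of mu_o|_S containing e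
   that first maximises the number of coordinates where z is oo and then minimises
   mu_o|_S(B) - sum_B z, complete it to a basis B u C of mu_o of the same value, and take
   the tropical sum over e of the cocircuit vectors of the hyperplanes (B - e) u C,
   shifted to the value z_e at e; the exchange inequality for such optimal B says
   precisely that this sum agrees with z on S. *)

Lemma cardsD1_in (T : finType) (A : {set T}) a k : a \in A -> #|A| = k.+1 -> #|A :\ a| = k.
Proof. by move=> aA; rewrite (cardsD1 a) aA => -[]. Qed.

Lemma notin_setD1 (T : finType) (A : {set T}) a b : b \notin A -> b \notin A :\ a.
Proof. by apply: contra => /setD1P[]. Qed.

Section ImsetD1.
Variables (aT rT : finType) (f : aT -> rT) (I : {set aT}) (c : aT).
Hypothesis cI : c \in I.

Lemma imsetD1_inj : {in I &, injective f} -> f @: (I :\ c) = (f @: I) :\ f c.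
Proof.
move=> inj; apply/setP => y; apply/imsetP/idP => [[a /setD1P[nac aI] ->]|].
  by rewrite !inE imset_f // andbT; apply: contra nac => /eqP/inj ->.
case/setD1P => nyc /imsetP[a aI ya]; exists a => //; rewrite !inE aI andbT.
by apply: contra nyc => /eqP ac; rewrite ya ac.
Qed.

Lemma imsetD1_dup : f c \in f @: (I :\ c) -> f @: (I :\ c) = f @: I.
Proof. by move=> fc; rewrite -{2}(setD1K cI) imsetU1 (setUidPr _) ?sub1set. Qed.

End ImsetD1.

Section TropicalArithmetic.
Variable R : realType.
Implicit Types (a b c : T R) (x : R).

Lemma Tle_refl a : Tle a a.
Proof. by case: a => /=. Qed.

Lemma Tle_trans b a c : Tle a b -> Tle b c -> Tle a c.
Proof. by case: a; case: b; case: c => //= x y z; apply: le_trans. Qed.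

Lemma Tle_anti a b : Tle a b -> Tle b a -> a = b.
Proof. by case: a => [x|]; case: b => [y|] //= h1 h2; rewrite (@le_anti _ _ x y) ?h1. Qed.

Lemma Tle_total a b : Tle a b || Tle b a.
Proof. by case: a; case: b => //= x y; apply: le_total. Qed.

Lemma Tle_None a : Tle a None.
Proof. by case: a. Qed.

Lemma Tle_None_eq a : Tle None a -> a = None.
Proof. by case: a. Qed.

Lemma Tle_finite a b : Tle a b -> b <> None -> a <> None.
Proof. by case: a; case: b. Qed.

Lemma TaddC a b : Tadd a b = Tadd b a.
Proof. by case: a; case: b => //= x y; rewrite addrC. Qed.

Lemma TaddA a b c : Tadd a (Tadd b c) = Tadd (Tadd a b) c.
Proof. by case: a; case: b; case: c => //= x y z; rewrite addrA. Qed.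

Lemma Taddr0 a : Tadd a (Some 0) = a.
Proof. by case: a => //= x; rewrite addr0. Qed.

Lemma TaddrNone a : Tadd a None = None.
Proof. by case: a. Qed.

Lemma Tadd_finite a b : Tadd a b <> None -> a <> None /\ b <> None.
Proof. by case: a; case: b. Qed.

Lemma Tle_add2l a b c : Tle b c -> Tle (Tadd a b) (Tadd a c).
Proof. by case: a; case: b; case: c => //= x y z; rewrite lerD2l. Qed.

Lemma Tle_add2r a b c : Tle b c -> Tle (Tadd b a) (Tadd c a).
Proof. by rewrite !(TaddC _ a); apply: Tle_add2l. Qed.

Lemma Tle_add2l_Some x b c : Tle (Tadd (Some x) b) (Tadd (Some x) c) = Tle b c.
Proof. by case: b; case: c => //= y z; rewrite lerD2l. Qed.

Lemma TminE a b : Tmin a b =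
  match a, b with Some x, Some y => Some (Order.min x y) | None, _ => b | _, None => a end.
Proof.
by rewrite /Tmin; case: a => [x|]; case: b => [y|] //=; case: leP.
Qed.

Lemma TminA : associative (@Tmin R).
Proof. by move=> a b c; rewrite !TminE; case: a; case: b; case: c => //= *; rewrite minA. Qed.

Lemma TminC : commutative (@Tmin R).
Proof. by move=> a b; rewrite !TminE; case: a; case: b => //= *; rewrite minC. Qed.

Lemma Tmin0 : left_id None (@Tmin R).
Proof. by case. Qed.

HB.instance Definition _ := Monoid.isComLaw.Build (T R) None (@Tmin R) TminA TminC Tmin0.

Lemma Tmin_lel a b : Tle (Tmin a b) a.
Proof.
rewrite /Tmin; case: ifP => [_|/negbT nle]; first exact: Tle_refl.
by have := Tle_total a b; rewrite (negbTE nle).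
Qed.

Lemma Tmin_glb a b c : Tle c a -> Tle c b -> Tle c (Tmin a b).
Proof. by rewrite /Tmin; case: ifP. Qed.

Section BigTmin.
Variables (I : finType) (P : pred I) (F : I -> T R).

Lemma bigTmin_le i : P i -> Tle (\big[@Tmin R/None]_(j | P j) F j) (F i).
Proof. by move=> Pi; rewrite (bigD1 i) //=; apply: Tmin_lel. Qed.

Lemma bigTmin_glb c : (forall i, P i -> Tle c (F i)) -> Tle c (\big[@Tmin R/None]_(i | P i) F i).
Proof.
move=> h; apply: (big_ind (Tle c)) => //; first exact: Tle_None.
by move=> a b; apply: Tmin_glb.
Qed.

Lemma bigTmin_attained : \big[@Tmin R/None]_(i | P i) F i <> None ->
  exists2 i, P i & \big[@Tmin R/None]_(j | P j) F j = F i.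
Proof.
elim/big_rec: _ => // i v Pi IH; rewrite /Tmin.
by case: ifP => _ fin; [exists i | apply: IH].
Qed.

End BigTmin.

Lemma bigTmin_twiceP (I : finType) (F : I -> T R) : \big[@Tmin R/None]_i F i <> None ->
  (exists i1 i2, [/\ i1 <> i2, F i1 = \big[@Tmin R/None]_i F i
                              & F i2 = \big[@Tmin R/None]_i F i]) <->
  (forall i, F i <> None -> exists2 j, j != i & Tle (F j) (F i)).
Proof.
set m := \big[_/_]_i F i => mN; have m_le i : Tle m (F i) by apply: (@bigTmin_le _ xpredT).
split=> [[i1 [i2 [ne12 h1 h2]]] i _|h].
  have [<-|ne1] := eqVneq i1 i; last by exists i1; rewrite // h1.
  by exists i2; [apply/eqP => e21; apply: ne12 | rewrite h1 h2; apply: Tle_refl].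
have [i1 _ me1] := @bigTmin_attained _ xpredT F mN; rewrite -/m in me1.
have [|i2 ne21 le21] := h i1; first by rewrite -me1.
exists i1, i2; split=> //; first by apply/eqP; rewrite eq_sym.
by apply: Tle_anti; [rewrite me1 | apply: m_le].
Qed.

End TropicalArithmetic.

Arguments bigTmin_le {R I} P F i.

Section TropicalLinearSpace.
Variables (R : realType) (E : finType).
Implicit Types (nu : {set E} -> T R) (x : E -> T R) (B H I S : {set E}).

Definition cterm nu I x e := Tadd (circ nu I e) (x e).

Definition in_trop_on k nu S x := forall I, I \subset S -> #|I| = k.+1 ->
  forall e, cterm nu I x e <> None ->
  exists2 e', e' != e & Tle (cterm nu I x e') (cterm nu I x e).

Definition in_trop k nu x := in_trop_on k nu [set: E] x.

Definition cocircuit nu H f := if f \in H then None else nu (f |: H).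

Lemma cterm_finite nu I x e : cterm nu I x e <> None ->
  [/\ e \in I, nu (I :\ e) <> None & x e <> None].
Proof. by rewrite /cterm /circ; case: ifP => // eI /Tadd_finite[]. Qed.

Lemma cterm_in nu I x e : e \in I -> cterm nu I x e = Tadd (nu (I :\ e)) (x e).
Proof. by rewrite /cterm /circ => ->. Qed.

Lemma tropE k nu x : trop k nu x <-> (exists e, x e <> None) /\ in_trop k nu x.
Proof.
rewrite /trop; split=> -[nz h]; split=> // I.
  move=> _ cI e he; have [eI nIe _] := cterm_finite he.
  have mN : \big[@Tmin R/None]_e cterm nu I x e <> None.
    by apply: Tle_finite he; apply: (bigTmin_le xpredT).
  have [|e1 [e2 twice]] := h I cI; first by exists e; rewrite /circ eI.
  by apply: (bigTmin_twiceP mN).1 he; exists e1, e2.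
move=> cI [e0 he0]; case mN : (\big[@Tmin R/None]_e cterm nu I x e) => [?|].
  by rewrite -mN; apply/(bigTmin_twiceP (F := cterm nu I x)); rewrite ?mN // => e; apply: h.
have [e1 he1] := nz; have mE e : cterm nu I x e = None.
  by apply: Tle_None_eq; rewrite -mN; apply: (bigTmin_le xpredT).
have [e1e0|ne10] := eqVneq e1 e0.
  by move: (mE e0); rewrite /cterm -e1e0 in he0 *; case: (circ nu I e1) he0; case: (x e1) he1.
by exists e1, e0; split; [apply/eqP | apply: mE | apply: mE].
Qed.

Lemma in_trop_nonloop k nu x B a : in_trop k nu x -> #|B| = k -> nu B <> None ->
  x a <> None -> exists B', [/\ #|B'| = k, nu B' <> None & a \in B'].
Proof.
move=> hx cB nB xa; have [aB|aB] := boolP (a \in B); first by exists B.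
have cI : #|a |: B| = k.+1 by rewrite cardsU1 aB cB.
have ha : cterm nu (a |: B) x a <> None.
  by rewrite cterm_in ?setU11 // setU1K //; case: (nu B) nB => // ?; case: (x a) xa.
have [c nca /Tle_finite/(_ ha)/cterm_finite[cI' ncI _]] := hx _ (subsetT _) cI _ ha.
by exists ((a |: B) :\ c); rewrite (cardsD1_in cI' cI) !inE eqxx eq_sym nca.
Qed.

Lemma cocircuit_in_trop r nu H : valuated_matroid r nu -> #|H|.+1 = r ->
  in_trop r nu (cocircuit nu H).
Proof.
move=> [_ exch] cH I _ cI e he.
have [eI nIe] := cterm_finite he; rewrite /cocircuit; case: ifP => // eH _.
have ceH : #|e |: H| = r by rewrite cardsU1 eH.
have [|j] := exch _ _ ceH (cardsD1_in eI cI) e; first by rewrite !inE eqxx.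
rewrite !inE negb_or => /andP[/andP[nje jH] /andP[_ jI]] hle.
exists j => //; rewrite !cterm_in // /cocircuit (negbTE jH) eH.
have e_swap : e |: ((I :\ e) :\ j) = I :\ j.
  apply/setP => y; rewrite !inE; have [->|//] := eqVneq y e.
  by rewrite eq_sym nje eI.
by move: hle; rewrite setU1K ?eH // e_swap TaddC (TaddC (nu (I :\ e))).
Qed.

Lemma in_trop_on_bigTmin k nu S (G : {set E}) (U : E -> E -> T R) (lam : E -> R) :
  (forall e, e \in G -> in_trop_on k nu S (U e)) ->
  in_trop_on k nu S (fun f => \big[@Tmin R/None]_(e in G) Tadd (Some (lam e)) (U e f)).
Proof.
move=> hU I IS cI a ha; have [aI nIa Xa] := cterm_finite ha.
have [e eG Xe] := bigTmin_attained Xa.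
have hUa : cterm nu I (U e) a <> None.
  by rewrite cterm_in //; move: Xa; rewrite Xe; case: (nu (I :\ a)) nIa => // ?; case: (U e a).
have [a' na'a hle] := hU e eG I IS cI a hUa; exists a' => //.
apply: (@Tle_trans _ (Tadd (Some (lam e)) (cterm nu I (U e) a'))).
  rewrite /cterm TaddA (TaddC (Some _)) -TaddA; apply: Tle_add2l.
  exact: (bigTmin_le (mem G) (fun e => Tadd (Some (lam e)) (U e a'))).
by rewrite {2}/cterm Xe TaddA (TaddC (circ _ _ _)) -TaddA Tle_add2l_Some.
Qed.

End TropicalLinearSpace.

Section Restriction.
Variables (R : realType) (E : finType) (r : nat) (nu : {set E} -> T R) (S : {set E}).
Implicit Types (x : E -> T R) (B C J : {set E}).
Local Notation rk := (rank_in r nu S).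
Local Notation rho := (restr r nu S).

Lemma rank_in_ge B : #|B| = r -> nu B <> None -> (#|B :&: S| <= rk)%N.
Proof.
move=> cB nB; apply: (@leq_bigmax_cond _ (fun B => (#|B| == r) && (nu B != None))).
by rewrite cB eqxx; apply/eqP.
Qed.

Lemma rank_in_le : (rk <= r)%N.
Proof. by apply/bigmax_leqP => B /andP[/eqP <- _]; apply/subset_leq_card/subsetIl. Qed.

Lemma restr_le J C : C \subset ~: S -> #|C| = (r - rk)%N -> Tle (rho J) (nu (J :|: C)).
Proof. by move=> CS cC; rewrite /restr; apply: bigTmin_le; rewrite CS cC eqxx. Qed.

Lemma restr_attained J : rho J <> None ->
  exists C, [/\ C \subset ~: S, #|C| = (r - rk)%N & rho J = nu (J :|: C)].
Proof. by case/bigTmin_attained => C /andP[CS /eqP cC] eC; exists C. Qed.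

Lemma card_disjU J C : J \subset S -> C \subset ~: S -> #|J :|: C| = (#|J| + #|C|)%N.
Proof.
move=> JS CS; rewrite cardsU (_ : J :&: C = set0) ?cards0 ?subn0 //.
by apply/disjoint_setI0; rewrite disjoints_subset (subset_trans JS) // -disjoints_subset
  disjoint_sym disjoints_subset.
Qed.

Lemma basis_meet_restr : valuated_matroid r nu -> exists B,
  [/\ #|B| = r, nu B <> None, #|B :&: S| = rk & rho (B :&: S) <> None].
Proof.
move=> [[B0 [cB0 nB0]] _].
pose basis B := (#|B| == r) && (nu B != None).
have [|B /andP[/eqP cB /eqP nB] Bmax] := @arg_maxnP _ B0 basis (fun B => #|B :&: S|).
  by rewrite /basis cB0 eqxx; apply/eqP.
have iB : #|B :&: S| = rk.
  by apply/anti_leq; rewrite rank_in_ge //; apply/bigmax_leqP.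
exists B; split => //.
have CS : B :\: S \subset ~: S by rewrite setDE subsetIr.
have cC : #|B :\: S| = (r - rk)%N by rewrite -iB -cB -(cardsID S B) addKn.
by move/Tle_finite: (restr_le (B :&: S) CS cC); rewrite setID; apply.
Qed.

Lemma in_trop_restr x : in_trop r nu x -> in_trop_on rk rho S x.
Proof.
move=> hx J JS cJ s hs; have [sJ nJs _] := cterm_finite hs.
have [C [CS cC eC]] := restr_attained nJs.
have notinC y : y \in J -> y \notin C.
  by move=> yJ; apply: contraL (subsetP JS y yJ) => /(subsetP CS); rewrite inE.
have cK : #|J :|: C| = r.+1 by rewrite card_disjU // cJ cC addSn subnKC ?rank_in_le.
have setDU y : y \in J -> (J :|: C) :\ y = (J :\ y) :|: C.
  move=> yJ; rewrite setDUl (setDidPl (_ : [disjoint C & [set y]])) //.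
  by rewrite disjoint_sym disjoints1 notinC.
have hsK : cterm nu (J :|: C) x s = cterm rho J x s.
  by rewrite !cterm_in ?inE ?sJ // setDU // eC.
have hK : cterm nu (J :|: C) x s <> None by rewrite hsK.
have [e' ne' hle] := hx _ (subsetT _) cK s hK.
have [e'K nKe _] := cterm_finite (Tle_finite hle hK).
(* A finite term at e' in C would give a basis of nu with rk + 1 elements in S. *)
have e'J : e' \in J.
  case/setUP: (e'K) => // e'C; have JK : J \subset ((J :|: C) :\ e') :&: S.
    by rewrite subsetI JS subsetD1 subsetUl (contraL (notinC e')) ?e'C.
  by have := leq_trans (subset_leq_card JK) (rank_in_ge (cardsD1_in e'K cK) nKe);
    rewrite cJ ltnn.
exists e' => //; rewrite -hsK; apply: Tle_trans hle.
by rewrite !cterm_in ?inE ?e'J // setDU // Tle_add2r // restr_le.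
Qed.

End Restriction.

Section Lift.
Variables (R : realType) (E : finType) (r : nat) (nu : {set E} -> T R) (S : {set E}).
Hypothesis nu_vm : valuated_matroid r nu.
Local Notation rk := (rank_in r nu S).
Local Notation rho := (restr r nu S).
Variable z : E -> T R.
Hypothesis z_trop : in_trop_on rk rho S z.
Implicit Types (B C J : {set E}) (e f s : E).

Definition zinf := [set s in S | z s == None].
Definition zfin := [set s in S | z s != None].
(* The defaults [0] in [zval], [zweight] and [lift_shift] are only read at finite values. *)
Definition zval s := odflt 0 (z s).

Definition sbasis J := [&& J \subset S, #|J| == rk & rho J != None].
Definition max_zinf := (\max_(J | sbasis J) #|J :&: zinf|)%N.
Definition zadmissible J := sbasis J && (#|J :&: zinf| == max_zinf).
Definition zweight J := odflt 0 (rho J) - \sum_(s in J :&: zfin) zval s.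
Definition zoptimal B :=
  zadmissible B && [forall J, zadmissible J ==> (zweight B <= zweight J)].

Lemma zfinE s : s \in zfin -> z s = Some (zval s).
Proof. by rewrite inE /zval => /andP[_]; case: (z s). Qed.

Lemma zfinS s : s \in zfin -> s \in S.
Proof. by rewrite inE => /andP[]. Qed.

Lemma zfinN s : s \in zfin -> s \notin zinf.
Proof. by rewrite !inE => /andP[-> ->]. Qed.

Lemma rbasis_swap B e f : sbasis B -> e \in B -> f \in S -> f \notin B ->
  rho (f |: (B :\ e)) <> None -> sbasis (f |: (B :\ e)).
Proof.
move=> /and3P[BS /eqP cB _] eB fS fB /eqP nB'; rewrite /sbasis nB' andbT.
rewrite subUset sub1set fS (subset_trans (subD1set B e)) //=.
by rewrite cardsU1 !inE (negbTE fB) andbF -cB (cardsD1 e B) eB.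
Qed.

Lemma zinf_swap_fin B e f : e \notin zinf -> f \notin zinf ->
  (f |: (B :\ e)) :&: zinf = B :&: zinf.
Proof.
move=> eF fF; apply/setP => y; rewrite !inE.
have [->|_] := eqVneq y f; first by move: fF; rewrite inE => /negbTE ->; rewrite !andbF.
by have [->|_] //= := eqVneq y e; move: eF; rewrite inE => /negbTE ->; rewrite andbF.
Qed.

Lemma zinf_swap_inf B e f : e \notin zinf -> f \in zinf -> f \notin B ->
  #|(f |: (B :\ e)) :&: zinf| = #|B :&: zinf|.+1.
Proof.
move=> eF fF fB; rewrite setIUl (setIidPl _) ?sub1set // setIDAC (setDidPl _).
  by rewrite cardsU1 inE (negbTE fB).
by rewrite disjoint_sym disjoints1 inE negb_and eF orbT.
Qed.

Lemma zweight_sum_swap B e f : e \in B -> e \in zfin -> f \in zfin -> f \notin B ->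
  \sum_(s in (f |: (B :\ e)) :&: zfin) zval s = \sum_(s in B :&: zfin) zval s - zval e + zval f.
Proof.
move=> eB eG fG fB; rewrite setIUl (setIidPl _) ?sub1set // setIDAC.
rewrite big_setU1 ?inE ?(negbTE fB) ?andbF //= [in RHS](big_setD1 e) ?in_setI ?eB ?eG //=.
lra.
Qed.

Lemma zoptimal_exists : exists B, zoptimal B.
Proof.
have [B0 [_ _ iB0 nB0]] := basis_meet_restr S nu_vm.
have [|J0 J0b J0max] := @arg_maxnP _ (B0 :&: S) sbasis (fun J => #|J :&: zinf|).
  by rewrite /sbasis subsetIr iB0 eqxx; apply/eqP.
have J0a : zadmissible J0.
  rewrite /zadmissible J0b eqn_leq (@leq_bigmax_cond _ sbasis (fun J => #|J :&: zinf|)) //.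
  exact/bigmax_leqP.
have [B Ba Bmin] := @arg_minP _ _ _ J0 zadmissible zweight J0a.
by exists B; rewrite /zoptimal Ba; apply/forall_inP.
Qed.

Lemma zoptimal_sbasis B : zoptimal B -> sbasis B.
Proof. by case/andP => /andP[]. Qed.

Lemma zoptimal_exchange B e f : zoptimal B -> e \in B -> e \in zfin -> f \in S -> f \notin B ->
  Tle (Tadd (rho B) (z f)) (Tadd (rho (f |: (B :\ e))) (z e)).
Proof.
move=> /andP[/andP[Bb /eqP Bmax] Bmin] eB eG fS fB.
case rB' : (rho (f |: (B :\ e))) => [u|]; last exact: Tle_None.
have B'b : sbasis (f |: (B :\ e)) by apply: rbasis_swap; rewrite ?rB'.
have [fF|fF] := boolP (f \in zinf).
  have := @leq_bigmax_cond _ sbasis (fun J => #|J :&: zinf|) _ B'b.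
  by rewrite -/max_zinf zinf_swap_inf ?zfinN // Bmax ltnn.
have fG : f \in zfin by move: fF; rewrite !inE fS.
have := forall_inP Bmin _ (_ : zadmissible (f |: (B :\ e))).
rewrite /zadmissible B'b zinf_swap_fin ?zfinN // Bmax eqxx => /(_ isT).
rewrite /zweight zweight_sum_swap // rB' (zfinE eG) (zfinE fG).
by move: Bb => /and3P[_ _]; case: (rho B) => //= w _ hw; lra.
Qed.

Lemma zoptimal_swap B e e' : zoptimal B -> e' \in B -> e' \in zfin -> e \in zfin -> e \notin B ->
  Tle (Tadd (rho (e |: (B :\ e'))) (z e')) (Tadd (rho B) (z e)) ->
  zoptimal (e |: (B :\ e')).
Proof.
move=> /andP[/andP[Bb /eqP Bmax] Bmin] e'B e'G eG eB hle.
move: (Bb) => /and3P[_ _ /eqP nB].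
have nB' : rho (e |: (B :\ e')) <> None.
  by apply: (Tadd_finite (Tle_finite hle _)).1; rewrite (zfinE eG); case: (rho B) nB.
have B'a : zadmissible (e |: (B :\ e')).
  by rewrite /zadmissible rbasis_swap ?zfinS // zinf_swap_fin ?zfinN // Bmax eqxx.
rewrite /zoptimal B'a; apply/forall_inP => J Ja; apply: le_trans (forall_inP Bmin J Ja).
move: hle; rewrite /zweight zweight_sum_swap // (zfinE eG) (zfinE e'G).
by case: (rho B) nB => // w _; case: (rho (e |: _)) nB' => //= u _ hu; lra.
Qed.

Lemma zoptimal_mem e : e \in zfin -> exists2 B, zoptimal B & e \in B.
Proof.
move=> eG; have [B0 B0opt] := zoptimal_exists.
have [eB0|eB0] := boolP (e \in B0); first by exists B0.
move: (zoptimal_sbasis B0opt) => /and3P[B0S /eqP cB0 /eqP nB0].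
have IS : e |: B0 \subset S by rewrite subUset sub1set zfinS.
have cI : #|e |: B0| = rk.+1 by rewrite cardsU1 eB0 cB0.
have he : cterm rho (e |: B0) z e <> None.
  by rewrite cterm_in ?setU11 // setU1K // (zfinE eG); case: (rho B0) nB0 => //=.
have [e' ne' hle] := z_trop IS cI he.
have [e'I _ ze'] := cterm_finite (Tle_finite hle he).
have e'B0 : e' \in B0 by move: e'I; rewrite !inE (negbTE ne').
have e'G : e' \in zfin by rewrite inE (subsetP B0S _ e'B0); apply/eqP.
have swapE : (e |: B0) :\ e' = e |: (B0 :\ e').
  by rewrite setDUl (setDidPl _) // disjoints1 inE eq_sym.
exists (e |: (B0 :\ e')); last by rewrite setU11.
apply: zoptimal_swap => //; move: hle.
by rewrite !cterm_in ?setU11 ?inE ?e'B0 ?orbT // setU1K // swapE.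
Qed.

Definition lift_data e (BC : {set E} * {set E}) := [&& zoptimal BC.1, e \in BC.1,
  BC.2 \subset ~: S, #|BC.2| == (r - rk)%N & rho BC.1 == nu (BC.1 :|: BC.2)].
Definition lift_pick e := odflt (set0, set0) [pick BC | lift_data e BC].
Definition lift_hyperplane e := ((lift_pick e).1 :\ e) :|: (lift_pick e).2.
Definition lift_shift e := zval e - odflt 0 (nu ((lift_pick e).1 :|: (lift_pick e).2)).
Definition lift_cocircuit e f := Tadd (Some (lift_shift e)) (cocircuit nu (lift_hyperplane e) f).
Definition zlift f := \big[@Tmin R/None]_(e in zfin) lift_cocircuit e f.

Lemma lift_pickP e : e \in zfin -> lift_data e (lift_pick e).
Proof.
move=> eG; rewrite /lift_pick; case: pickP => [BC //|none].
have [B Bopt eB] := zoptimal_mem eG.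
have nB : rho B <> None by move: (zoptimal_sbasis Bopt) => /and3P[_ _ /eqP].
have [C [CS cC eC]] := restr_attained nB.
by have := none (B, C); rewrite /lift_data Bopt eB CS cC eC !eqxx.
Qed.

Lemma card_lift_hyperplane e : e \in zfin -> #|lift_hyperplane e|.+1 = r.
Proof.
move=> eG; have := lift_pickP eG; rewrite /lift_hyperplane.
case: (lift_pick e) => B C /= /and5P[/zoptimal_sbasis/and3P[BS /eqP cB _] eB CS /eqP cC _] /=.
rewrite (@card_disjU _ S) ?(subset_trans (subD1set B e)) // cC.
by have := cardsD1 e B; rewrite eB cB; have := rank_in_le r nu S; lia.
Qed.

Lemma lift_cocircuit_self e : e \in zfin -> lift_cocircuit e e = z e.
Proof.
move=> eG; have := lift_pickP eG; rewrite /lift_cocircuit /lift_hyperplane /lift_shift.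
case: (lift_pick e) => B C /= /and5P[/zoptimal_sbasis/and3P[_ _ /eqP nB] eB CS _ /eqP eC] /=.
have eC' : e \notin C by apply: contraL (zfinS eG) => /(subsetP CS); rewrite inE.
rewrite /cocircuit in_setU setD11 (negbTE eC') /= setUA setD1K // -eC (zfinE eG).
by case: (rho B) nB => //= w _; rewrite subrK.
Qed.

Lemma lift_cocircuit_ge e f : e \in zfin -> f \in S -> Tle (z f) (lift_cocircuit e f).
Proof.
move=> eG fS; have [->|nfe] := eqVneq f e; first by rewrite lift_cocircuit_self ?Tle_refl.
have := lift_pickP eG; rewrite /lift_cocircuit /lift_hyperplane /lift_shift.
case: (lift_pick e) => B C /= /and5P[Bopt eB CS /eqP cC /eqP eC] /=.
rewrite /cocircuit; case: ifP => [_|fH]; first exact: Tle_None.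
have fB : f \notin B by apply: contraFN fH => fB; rewrite !inE nfe fB.
have := zoptimal_exchange Bopt eB eG fS fB; have := restr_le (f |: (B :\ e)) CS cC.
move: (zoptimal_sbasis Bopt) => /and3P[_ _ /eqP nB]; rewrite setUA -eC (zfinE eG).
case: (rho B) nB => // w _; case: (rho _) => [u|]; case: (nu _) => [v|] //=;
  case: (z f) => [zf|] //= hv hu; lra.
Qed.

Lemma zlift_in_trop : in_trop r nu zlift.
Proof.
apply: in_trop_on_bigTmin => e eG.
by apply: cocircuit_in_trop => //; apply: card_lift_hyperplane.
Qed.

Lemma zlift_eq s : s \in S -> zlift s = z s.
Proof.
move=> sS; apply: Tle_anti; last by apply: bigTmin_glb => e eG; apply: lift_cocircuit_ge.
have [sG|sF] := boolP (s \in zfin).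
  by rewrite -(lift_cocircuit_self sG); apply: (bigTmin_le (mem zfin)).
by move: sF; rewrite !inE sS negbK => /eqP ->; apply: Tle_None.
Qed.

End Lift.

Lemma in_trop_restr_lift (R : realType) (E : finType) r (nu : {set E} -> T R) S z :
  valuated_matroid r nu -> in_trop_on (rank_in r nu S) (restr r nu S) S z ->
  exists2 x, in_trop r nu x & forall s, s \in S -> x s = z s.
Proof. by move=> vm hz; exists (zlift r nu S z); [apply: zlift_in_trop | apply: zlift_eq]. Qed.

Section Pointed.
Variables (R : realType) (n r : nat) (mu : {set 'I_n} -> T R).
Implicit Types (I : {set option 'I_n}) (J : {set 'I_n}).

Definition point_ext (x : 'I_n -> T R) (o : option 'I_n) : T R :=
  if o is Some i then x i else None.

Lemma pointedE I : None \notin I -> pointed mu I = mu (Some @^-1: I).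
Proof. by rewrite /pointed => /negbTE ->. Qed.

Lemma preimset_Some_imset J : Some @^-1: (Some @: J) = J.
Proof. by apply/setP => i; rewrite inE (mem_imset _ _ (@Some_inj _)). Qed.

Lemma imset_Some_preimset I : None \notin I -> Some @: (Some @^-1: I) = I.
Proof.
move=> NI; apply/setP => -[i|]; last by rewrite (negbTE NI); apply/imsetP => -[].
by rewrite (mem_imset _ _ (@Some_inj _)) inE.
Qed.

Lemma card_imset_Some J : #|Some @: J| = #|J|.
Proof. exact/card_imset/Some_inj. Qed.

Lemma card_preimset_Some I : None \notin I -> #|Some @^-1: I| = #|I|.
Proof. by move=> NI; rewrite -card_imset_Some imset_Some_preimset. Qed.

Lemma preimset_Some_D1 I k : Some @^-1: (I :\ Some k) = (Some @^-1: I) :\ k.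
Proof. by apply/setP => i; rewrite !inE. Qed.

Lemma preimset_Some_U1 I k : Some @^-1: (Some k |: I) = k |: (Some @^-1: I).
Proof. by apply/setP => i; rewrite !inE. Qed.

Lemma cterm_pointed I (X : option 'I_n -> T R) k : None \notin I ->
  cterm (pointed mu) I X (Some k) = cterm mu (Some @^-1: I) (X \o Some) k.
Proof.
move=> NI; rewrite /cterm /circ inE.
by case: ifP => // _; rewrite pointedE ?notin_setD1 // preimset_Some_D1.
Qed.

Lemma pointed_valuated : valuated_matroid r mu -> valuated_matroid r (pointed mu).
Proof.
move=> [[B [cB nB]] exch]; split.
  exists (Some @: B); rewrite card_imset_Some pointedE ?preimset_Some_imset //.
  by apply/imsetP => -[].
move=> I J cI cJ i iIJ.
have [NIJ|] := boolP ((None \in I) || (None \in J)).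
  have /card_gt0P[j jJI] : (0 < #|J :\: I|)%N.
    by rewrite cardsD setIC cJ -cI -cardsD; apply/card_gt0P; exists i.
  by exists j => //; case/orP: NIJ => N; rewrite /pointed N /= ?TaddrNone; apply: Tle_None.
rewrite negb_or => /andP[NI NJ].
case: i iIJ => [i|] iIJ; last by move: iIJ; rewrite inE (negbTE NI) andbF.
have iIJ' : i \in (Some @^-1: I) :\: (Some @^-1: J) by move: iIJ; rewrite !inE andbC.
have [j0 + hle] := exch _ _ (etrans (card_preimset_Some NI) cI)
  (etrans (card_preimset_Some NJ) cJ) i iIJ'.
rewrite !inE andbC => j0JI; exists (Some j0); first by rewrite inE andbC.
have notinU1 (K : {set option 'I_n}) k : None \notin K -> None \notin Some k |: K by rewrite !inE.
by rewrite !pointedE ?notinU1 ?notin_setD1 // !preimset_Some_U1 !preimset_Some_D1.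
Qed.

Lemma in_trop_point_ext x : in_trop r mu x -> in_trop r (pointed mu) (point_ext x).
Proof.
move=> hx I _ cI [e|] he; last by have [] := cterm_finite he.
have [eI nIe _] := cterm_finite he.
have NI : None \notin I.
  by apply: contra_notN nIe => NI; rewrite /pointed !inE NI.
rewrite cterm_pointed // in he.
have [e1 ne1 hle] := hx _ (subsetT _) (etrans (card_preimset_Some NI) cI) e he.
exists (Some e1); first by apply: contra ne1 => /eqP [->].
by rewrite !cterm_pointed.
Qed.

Lemma in_trop_unpoint X : in_trop r (pointed mu) X -> in_trop r mu (X \o Some).
Proof.
move=> hX I _ cI e he.
have NI : None \notin Some @: I by apply/imsetP => -[].
have he' : cterm (pointed mu) (Some @: I) X (Some e) <> None.
  by rewrite cterm_pointed // preimset_Some_imset.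
have [|[e1|] ne1 hle] := hX _ (subsetT _) _ _ he'; first by rewrite card_imset_Some.
  exists e1; first by apply: contra ne1 => /eqP ->.
  by move: hle; rewrite !cterm_pointed // preimset_Some_imset.
by have [] := cterm_finite (Tle_finite hle he'); rewrite (negbTE NI).
Qed.

End Pointed.

Section Induced.
Variables (R : realType) (n r : nat) (mu : {set 'I_n} -> T R).
Variables (f1 : option 'I_n -> option 'I_n) (f2 : option 'I_n -> T R).
Hypothesis f2_fin : forall i, f1 i <> None -> f2 i = Some 0.
Hypothesis mu_vm : valuated_matroid r mu.
Local Notation S := (fimage f1).
Local Notation rho := (restr r (pointed mu) S).
Local Notation rk := (rank_in r (pointed mu) S).
Local Notation iota := (induced r mu f1 f2).
Implicit Types (I J B : {set option 'I_n}) (X : option 'I_n -> T R) (x : 'I_n -> T R).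

Lemma restr_pointed_None J : None \in J -> rho J = None.
Proof. by move=> NJ; apply: big1 => C _; rewrite /pointed inE NJ. Qed.

Lemma inducedE B : (forall b, b \in B -> f1 b <> None) -> #|f1 @: B| = #|B| ->
  iota B = rho (f1 @: B).
Proof.
move=> hB cB; rewrite /induced cB eqxx (_ : Tsum B f2 = Some 0) ?Taddr0 //.
apply: (big_ind (eq^~ (Some 0))) => // [_ _ -> ->|b bB]; first by rewrite /= addr0.
exact/f2_fin/hB.
Qed.

Lemma induced_finite B : iota B <> None ->
  #|f1 @: B| = #|B| /\ forall b, b \in B -> f1 b <> None.
Proof.
rewrite /induced; case: eqP => // cB nB; split => // b bB fb.
by apply: nB; rewrite restr_pointed_None // -fb imset_f.
Qed.

Lemma induced_not_injective B a b : a \in B -> b \in B -> a != b -> f1 a = f1 b ->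
  iota B = None.
Proof.
move=> aB bB nab fab; apply/eqP; apply: contraNT nab.
by move=> /eqP/induced_finite[/eqP/imset_injP inj _]; rewrite (inj _ _ aB bB fab).
Qed.

Lemma induced_D1_parallel I a b : a \in I -> b \in I -> f1 a = f1 b ->
  iota (I :\ a) <> None -> iota (I :\ b) = iota (I :\ a).
Proof.
move=> aI bI fab nIa; have [<-//|nab] := eqVneq a b.
have [cIa hIa] := induced_finite nIa.
have bIa : b \in I :\ a by rewrite !inE eq_sym nab.
have aIb : a \in I :\ b by rewrite !inE nab.
have eIa : f1 @: (I :\ a) = f1 @: I by rewrite imsetD1_dup // fab imset_f.
have eIb : f1 @: (I :\ b) = f1 @: I by rewrite imsetD1_dup // -fab imset_f.
have hIb c : c \in I :\ b -> f1 c <> None.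
  move=> cIb; have [->|nca] := eqVneq c a; first by rewrite fab; apply: hIa.
  by apply: hIa; move: cIb; rewrite !inE nca => /andP[].
rewrite !inducedE // ?eIa ?eIb // -eIa cIa.
by move: (cardsD1 a I) (cardsD1 b I); rewrite aI bI; lia.
Qed.

Lemma cterm_induced I c X (Z : option 'I_n -> T R) :
  {in I &, injective f1} -> (forall b, b \in I -> f1 b <> None) ->
  c \in I -> X c = Z (f1 c) -> cterm iota I X c = cterm rho (f1 @: I) Z (f1 c).
Proof.
move=> inj hI cI hX; rewrite !cterm_in ?imset_f // hX -imsetD1_inj // inducedE //.
  by move=> b /setD1P[_ /hI].
by apply/eqP/imset_injP => a b /setD1P[_ aI] /setD1P[_ bI]; apply: inj.
Qed.

Lemma in_trop_induced_comp x : in_trop r mu x -> in_trop rk iota (point_ext x \o f1).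
Proof.
move=> hx I _ cI a ha; have [aI nIa Xa] := cterm_finite ha.
have [cIa hIa] := induced_finite nIa.
have [/imsetP[b /setD1P[nba bI] fab]|nfa] := boolP (f1 a \in f1 @: (I :\ a)).
  exists b => //; rewrite !cterm_in // (induced_D1_parallel aI bI) //= -fab.
  exact: Tle_refl.
have hI b : b \in I -> f1 b <> None.
  move=> bI; have [->|nba] := eqVneq b a; last by apply: hIa; rewrite !inE nba.
  by move: Xa => /=; case: (f1 a).
have cfI : #|f1 @: I| = #|I|.
  by rewrite -(setD1K aI) imsetU1 cardsU1 nfa cIa [in RHS]cardsU1 setD11.
have inj : {in I &, injective f1} by apply/imset_injP; rewrite cfI.
have termE c : c \in I ->
    cterm iota I (point_ext x \o f1) c = cterm rho (f1 @: I) (point_ext x) (f1 c).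
  by move=> cI'; apply: cterm_induced.
have hta : cterm rho (f1 @: I) (point_ext x) (f1 a) <> None by rewrite -termE.
have JS : f1 @: I \subset S by apply/imsetS/subsetT.
have [s' ns' hle] := in_trop_restr (S := S) (in_trop_point_ext hx) JS (etrans cfI cI) hta.
have [/imsetP[b bI sb] _ _] := cterm_finite (Tle_finite hle hta).
exists b; first by apply: contra ns' => /eqP ba; rewrite sb ba.
by rewrite !termE // -sb.
Qed.

Definition fiber_rep s := odflt s [pick a | f1 a == s].

Lemma f1_fiber_rep s : s \in S -> f1 (fiber_rep s) = s.
Proof.
case/imsetP=> a _ ->; rewrite /fiber_rep; case: pickP => [a' /eqP //|none].
by have := none a; rewrite eqxx.
Qed.

Lemma fiber_rep_imset J : J \subset S -> f1 @: (fiber_rep @: J) = J /\ #|fiber_rep @: J| = #|J|.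
Proof.
move=> JS; have fpreJ : f1 @: (fiber_rep @: J) = J.
  rewrite -imset_comp -[RHS]imset_id; apply: eq_in_imset => s sJ /=.
  by rewrite f1_fiber_rep // (subsetP JS).
split=> //; apply/anti_leq; rewrite leq_imset_card /=.
by rewrite -{1}fpreJ leq_imset_card.
Qed.

Lemma induced_basis : exists2 B : {set option 'I_n}, #|B| = rk & iota B <> None.
Proof.
have [B0 [_ _ iB0 nB0]] := basis_meet_restr S (pointed_valuated mu_vm).
have [fpreJ cpreJ] := fiber_rep_imset (subsetIr B0 S).
have NJ : None \notin B0 :&: S by apply: contra_notN nB0; apply: restr_pointed_None.
exists (fiber_rep @: (B0 :&: S)); first by rewrite cpreJ.
rewrite inducedE ?fpreJ ?cpreJ // => b /(imset_f f1) + fb.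
by rewrite fpreJ fb (negbTE NJ).
Qed.

Section InducedFactor.
Variable X : option 'I_n -> T R.
Hypothesis X_trop : in_trop rk iota X.

Lemma in_trop_induced_loop a : f1 a = None -> X a = None.
Proof.
move=> fa; apply/eqP; apply/contraT => /eqP Xa; have [B cB nB] := induced_basis.
have [B' [_ nB' aB']] := in_trop_nonloop X_trop cB nB Xa.
by have [_ /(_ a aB')] := induced_finite nB'.
Qed.

Lemma in_trop_induced_parallel_le a b : a != b -> f1 a = f1 b -> Tle (X a) (X b).
Proof.
move=> nab fab; case Xb: (X b) => [v|]; last exact: Tle_None.
have Xb' : X b <> None by rewrite Xb.
have [B0 cB0 nB0] := induced_basis; rewrite -Xb.
have [B [cB nB bB]] := in_trop_nonloop X_trop cB0 nB0 Xb'.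
have aB : a \notin B.
  by apply/negP => aB; apply: nB; apply: (induced_not_injective aB bB nab fab).
have cI : #|a |: B| = rk.+1 by rewrite cardsU1 aB cB.
have aI := setU11 a B; have bI : b \in a |: B by rewrite setU1r.
have terma : cterm iota (a |: B) X a = Tadd (iota B) (X a) by rewrite cterm_in // setU1K.
have termb : cterm iota (a |: B) X b = Tadd (iota B) (X b).
  by rewrite cterm_in // (induced_D1_parallel aI bI) ?setU1K.
have hb : cterm iota (a |: B) X b <> None by rewrite termb Xb; case: (iota B) nB => /=.
have [c ncb hle] := X_trop (subsetT _) cI hb.
have [cI' nIc _] := cterm_finite (Tle_finite hle hb).
have ca : c = a.
  case/setU1P: cI' => // cinB; case: nIc; apply: (induced_not_injective _ _ nab fab).
    by rewrite !inE eqxx andbT; apply: contraNneq aB => ->.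
  by rewrite !inE eq_sym ncb bB orbT.
by move: hle; rewrite ca terma termb; case: (iota B) nB => // w _; rewrite Tle_add2l_Some.
Qed.

Lemma in_trop_induced_parallel a b : f1 a = f1 b -> X a = X b.
Proof.
move=> fab; have [->//|nab] := eqVneq a b.
by apply: Tle_anti; apply: in_trop_induced_parallel_le; rewrite // eq_sym.
Qed.

Lemma in_trop_induced_fiber_rep a : X (fiber_rep (f1 a)) = X a.
Proof. by apply: in_trop_induced_parallel; rewrite f1_fiber_rep // imset_f. Qed.

Lemma in_trop_restr_comp_fiber_rep : in_trop_on rk rho S (X \o fiber_rep).
Proof.
move=> J JS cJ s hs; have [sJ nJs zs] := cterm_finite hs.
have fs : f1 (fiber_rep s) = s by rewrite f1_fiber_rep // (subsetP JS).
have NJ : None \notin J.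
  apply/negP => NJ; have [sN|nsN] := eqVneq s None.
    by apply: zs; rewrite /= in_trop_induced_loop // fs.
  by apply: nJs; apply: restr_pointed_None; rewrite !inE eq_sym nsN.
have [fpreJ cpreJ] := fiber_rep_imset JS.
have inj : {in fiber_rep @: J &, injective f1} by apply/imset_injP; rewrite fpreJ cpreJ.
have hI c : c \in fiber_rep @: J -> f1 c <> None.
  by move=> /(imset_f f1) + fc; rewrite fpreJ fc (negbTE NJ).
have termE c : c \in fiber_rep @: J ->
    cterm iota (fiber_rep @: J) X c = cterm rho J (X \o fiber_rep) (f1 c).
  by move=> cJ'; rewrite (cterm_induced (Z := X \o fiber_rep)) ?fpreJ //= in_trop_induced_fiber_rep.
have sI : fiber_rep s \in fiber_rep @: J by apply: imset_f.
have hs' : cterm iota (fiber_rep @: J) X (fiber_rep s) <> None by rewrite termE // fs.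
have [b nbs hle] := X_trop (subsetT _) (etrans cpreJ cJ) hs'.
have [bI _ _] := cterm_finite (Tle_finite hle hs').
exists (f1 b); last by move: hle; rewrite !termE // fs.
apply: contra nbs; case/imsetP: bI => s' s'J ->.
by rewrite f1_fiber_rep ?(subsetP JS) // => /eqP ->.
Qed.

End InducedFactor.

Lemma in_trop_induced_factor X : in_trop rk iota X ->
  exists2 x, in_trop r mu x & forall a, X a = point_ext x (f1 a).
Proof.
move=> hX; have [Y hY eY] :=
  in_trop_restr_lift (pointed_valuated mu_vm) (in_trop_restr_comp_fiber_rep hX).
exists (Y \o Some); first exact: in_trop_unpoint.
move=> a; case fa: (f1 a) => [j|] /=; last exact: in_trop_induced_loop hX _ fa.
by rewrite -fa eY ?imset_f //; apply/esym/(in_trop_induced_fiber_rep hX).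
Qed.

End Induced.

Section AssociatedMatrix.
Variables (R : realType) (K : fieldType) (val : K -> T R) (n : nat).
Hypothesis val_nonarch : nonarch_valuation val.
Implicit Types (A : 'M[K]_n).

Lemma val0 : val 0 = None.
Proof. by case: val_nonarch => /(_ 0) [_ ->]. Qed.

Lemma val1 : val 1 = Some 0.
Proof.
case: val_nonarch => val_None /(_ 1 1) + _; rewrite mul1r.
case v1 : (val 1) => [v|] /=; last by move/val_None: v1 => /eqP; rewrite oner_eq0.
by case=> vv; congr Some; lra.
Qed.

Lemma tmatvec_assoc (f1 : option 'I_n -> option 'I_n) (f2 : option 'I_n -> T R) A x :
  (forall i, f1 i <> None -> f2 i = Some 0) ->
  assoc_matrix val f1 f2 A -> forall i, tmatvec val A x i = point_ext x (f1 (Some i)).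
Proof.
move=> f2_fin [_ hA] i; rewrite /tmatvec.
have offE j : f1 (Some i) <> Some j -> Tadd (val (A i j)) (x j) = None.
  by case: (hA i j) => _ /[apply] ->; rewrite val0.
case fi : (f1 (Some i)) => [j|] /=; last by apply: big1 => j _; apply: offE; rewrite fi.
rewrite (bigD1 j) //= big1 => [|k nkj]; last first.
  by apply: offE; rewrite fi => -[jk]; rewrite jk eqxx in nkj.
have [onE _] := hA i j; rewrite onE // f2_fin ?fi //.
by rewrite /Tmin TaddC Taddr0 Tle_None.
Qed.

Lemma assoc_map2_fin A : (forall i j, A i j = 0 \/ A i j = 1) ->
  forall i, assoc_map1 A i <> None -> assoc_map2 val A i = Some 0.
Proof.
move=> A01 [i|] //=; case: pickP => [j Aij|] // _.
by case: (A01 i j) => Aij01; [move: Aij; rewrite Aij01 eqxx | rewrite Aij01 val1].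
Qed.

Lemma assoc_matrix_assoc_map A : weakly_monomial A ->
  assoc_matrix val (assoc_map1 A) (assoc_map2 val A) A.
Proof.
move=> wmA; split=> [i|i j] /=.
  by case: pickP => [j _|_]; [exists (A i j) | exists 0; rewrite val0].
split=> [->//|]; case: pickP => [k Aik|rowi0] ne.
  by apply/eqP; apply: contraNT (introN eqP ne) => Aij; rewrite (wmA i k j).
exact/eqP/negbFE/rowi0.
Qed.

Section InducedImage.
Variables (r : nat) (mu : {set 'I_n} -> T R) (f1 : option 'I_n -> option 'I_n).
Variables (f2 : option 'I_n -> T R) (A : 'M[K]_n).
Hypothesis mu_vm : valuated_matroid r mu.
Hypothesis f2_fin : forall i, f1 i <> None -> f2 i = Some 0.
Hypothesis A_assoc : assoc_matrix val f1 f2 A.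

Lemma trop_induced_image : Pset_eq (trop_induced r mu f1 f2) (trop_image val r mu A).
Proof.
move=> y [i0 yi0]; have tmvE := tmatvec_assoc _ f2_fin A_assoc; split.
  move=> [X /tropE[_ hX] eX]; have [x hx eXx] := in_trop_induced_factor f2_fin mu_vm hX.
  exists x => [|i]; last by rewrite tmvE -eX eXx.
  apply/tropE; split => //; move: yi0; rewrite -eX eXx.
  by case: (f1 (Some i0)) => [j|] //; exists j.
move=> [x /tropE[_ hx] ex]; exists (point_ext x \o f1) => [|i]; last by rewrite -ex tmvE.
apply/tropE; split; last exact: in_trop_induced_comp.
by exists (Some i0); rewrite /= -tmvE ex.
Qed.

End InducedImage.
End AssociatedMatrix.

Unset Implicit Arguments.
Theorem lemma2p22 (R : realType) (K : fieldType) (val : K -> T R)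
    (n r : nat) (mu : {set 'I_n} -> T R) :
  nonarch_valuation val ->
  valuated_matroid r mu ->
  (* (i) *)
  (forall (f1 : option 'I_n -> option 'I_n) (f2 : option 'I_n -> T R),
     (forall i, f1 i <> None -> f2 i = Some 0) ->
     forall A : 'M[K]_n, weakly_monomial A -> assoc_matrix val f1 f2 A ->
       Pset_eq (trop_induced r mu f1 f2) (trop_image val r mu A))
  /\
  (* (ii) *)
  (forall A : 'M[K]_n, weakly_monomial A ->
     (forall i j, A i j = 0 \/ A i j = 1) ->
       Pset_eq (trop_induced r mu (assoc_map1 A) (assoc_map2 val A))
               (trop_image val r mu A)).
Proof.
move=> val_nonarch mu_vm; split=> [f1 f2 f2_fin A _ A_assoc|A wmA A01].
  (* Weak monomiality is already implied by [assoc_matrix]. *)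
  exact: trop_induced_image.
apply: trop_induced_image => //; first exact: assoc_map2_fin.
exact: assoc_matrix_assoc_map.
Qed.
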